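(* Let $\Gamma=(G,\sigma)$ be a signed graph with vertex set $V_G$, and let $\pi=\{C_1,\ldots,C_t,D\}$ be a partition of $V_G$ with $|C_i|=n_i$ ($i=1,\ldots,t$) and $|D|=d$. Assume: (1) for each $1\le i,j\le t$, any two vertices in $C_i$ have the same $j$-th net-degree, i.e. $d^{\pm}_j(u)=d^{\pm}_j(w)$ for all $u,w\in C_i$; (2) for each $i=1,\ldots,t$ and each $v\in D$, exactly one of the following holds: (a) $d^{\pm}_i(v)=0$; (b) $d^+_i(v)=n_i/2$ and $d^-_i(v)=0$; (c) $d^-_i(v)=n_i/2$ and $d^+_i(v)=0$; (d) $d^+_i(v)=n_i$; (e) $d^-_i(v)=n_i$. Define the signed graph $\Gamma^\pi$ on the same vertex set as follows: all edges not joining a vertex of $D$ to a vertex of $\bigcup_i C_i$ are kept with their signs; for every $v\in D$ and every $1\le i\le t$: in case (a), every edge between $v$ and $C_i$ is kept but its sign is reversed; in case (b), the $n_i/2$ (positive) edges from $v$ to $C_i$ are deleted and $v$ is joined by positive edges to the other $n_i/2$ vertices of $C_i$; in case (c), the $n_i/2$ (negative) edges from $v$ to $C_i$ are deleted and $v$ is joined by negative edges to the other $n_i/2$ vertices of $C_i$; in cases (d) and (e), the edges from $v$ to $C_i$ are left unchanged. Then $\Gamma$ and $\Gamma^\pi$ are cospectral, i.e. their adjacency matrices have the same characteristic polynomial.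
   Context: A signed graph $\Gamma=(G,\sigma)$ is a simple finite graph $G=(V_G,E_G)$ with a map $\sigma:E_G\to\{+1,-1\}$. Its adjacency matrix $A_\Gamma=(a_{uv})$ is the symmetric matrix with $a_{uv}=\sigma(uv)$ if $u,v$ are adjacent and $a_{uv}=0$ otherwise; two signed graphs are cospectral if $\det(xI-A)$ coincide. For a vertex $v$ and a vertex subset $C_i$, $d^+_i(v)$ (resp. $d^-_i(v)$) is the number of positive (resp. negative) edges joining $v$ to vertices of $C_i$, and the $i$-th net-degree is $d^{\pm}_i(v)=d^+_i(v)-d^-_i(v)$. *)

From HB Require Import structures.
From mathcomp Require Import all_boot all_order all_algebra.
Set Implicit Arguments. Unset Strict Implicit. Unset Printing Implicit Defensive.
Import Order.TTheory GRing.Theory Num.Theory.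
Local Open Scope ring_scope.

(* A signed graph on the vertex set 'I_n is represented by its adjacency
   matrix A : 'M[int]_n : A u v = sigma(uv) in {1,-1} if uv is an edge,
   and 0 otherwise; simple graph => symmetric, zero diagonal. *)
Definition signed_adj (n : nat) (A : 'M[int]_n) : Prop :=
  [/\ forall u v, A u v = A v u,
      forall u, A u u = 0 &
      forall u v, A u v = 0 \/ A u v = 1 \/ A u v = -1].

Definition dpos (n : nat) (A : 'M[int]_n) (C : {set 'I_n}) (v : 'I_n) : nat :=
  #|[set u in C | A v u == 1]|.
Definition dneg (n : nat) (A : 'M[int]_n) (C : {set 'I_n}) (v : 'I_n) : nat :=
  #|[set u in C | A v u == -1]|.
Definition netdeg (n : nat) (A : 'M[int]_n) (C : {set 'I_n}) (v : 'I_n) : int :=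
  (dpos A C v)%:Z - (dneg A C v)%:Z.

Definition case_a n (A : 'M[int]_n) C v : bool := netdeg A C v == 0.
Definition case_b n (A : 'M[int]_n) C v : bool :=
  ((2 * dpos A C v)%N == #|C|) && (dneg A C v == 0%N).
Definition case_c n (A : 'M[int]_n) C v : bool :=
  ((2 * dneg A C v)%N == #|C|) && (dpos A C v == 0%N).
Definition case_d n (A : 'M[int]_n) C v : bool := dpos A C v == #|C|.
Definition case_e n (A : 'M[int]_n) C v : bool := dneg A C v == #|C|.

Definition exactly_one_case n (A : 'M[int]_n) C v : Prop :=
  count id [:: case_a A C v; case_b A C v; case_c A C v;
               case_d A C v; case_e A C v] = 1%N.

Definition new_entry n t (A : 'M[int]_n) (C : 'I_t -> {set 'I_n})
    (v u : 'I_n) : int :=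
  match [pick i | u \in C i] with
  | Some i =>
      if case_a A (C i) v then - A v u
      else if case_b A (C i) v then (if A v u == 0 then 1 else 0)
      else if case_c A (C i) v then (if A v u == 0 then -1 else 0)
      else A v u
  | None => A v u
  end.

Definition pi_matrix n t (A : 'M[int]_n) (C : 'I_t -> {set 'I_n})
    (D : {set 'I_n}) : 'M[int]_n :=
  \matrix_(x, y)
    if (x \in D) && (y \notin D) then new_entry A C x y
    else if (y \in D) && (x \notin D) then new_entry A C y x
    else A x y.

From HB Require Import structures.
From mathcomp Require Import all_boot all_order all_algebra.
From mathcomp Require Import ring.
Set Implicit Arguments. Unset Strict Implicit. Unset Printing Implicit Defensive.
Import Order.TTheory GRing.Theory Num.Theory.
Local Open Scope ring_scope.

(* Over the rationals, let Q be the symmetric matrix which acts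
   as the identity on the rows/columns of D and, on each block C_i x C_i, as
   (2/n_i) J - I (J the all-ones matrix), and vanishes elsewhere.  Q is a
   reflection (Q^2 = 1), so conjugating by Q preserves the characteristic
   polynomial.  We show that Q A Q is the adjacency matrix of Gamma^pi:
   - on D x D nothing changes;
   - on C_i x C_j the correction terms cancel by double counting the edges
     between C_i and C_j, using the equitability condition (1);
   - on D x C_j the entry becomes (2/n_j) d^{+-}_j(v) - A v y, which is
     exactly the switched entry prescribed by cases (a)-(e) of condition (2). *)

Lemma char_poly_involution_conj (R : comNzRingType) n (Q M : 'M[R]_n) :
  Q *m Q = 1%:M -> char_poly (Q *m M *m Q) = char_poly M.
Proof.
move=> QQ; set Qp := map_mx (@polyC R) Q.
have QpQp : Qp *m Qp = 1%:M by rewrite -map_mxM QQ map_scalar_mx.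
have conj_mx : char_poly_mx (Q *m M *m Q) = Qp *m char_poly_mx M *m Qp.
  rewrite /char_poly_mx !map_mxM mulmxBr mulmxBl -/Qp.
  by rewrite mul_mx_scalar -scalemxAl QpQp scalemx1.
by rewrite /char_poly conj_mx !det_mulmx mulrC mulrA -det_mulmx QpQp det1 mul1r.
Qed.

Lemma sum_indicator (R : pzSemiRingType) (T : finType) (S : {set T}) (y : T) :
  \sum_(u in S) ((u == y)%:R : R) = (y \in S)%:R.
Proof.
rewrite big_mkcond (bigD1 y) //= eqxx big1 ?addr0 => [|u /negbTE->]; last first.
  by case: (u \in S).
by case: (y \in S).
Qed.

Lemma sum_delta (R : pzSemiRingType) (T : finType) (x : T) (F : T -> R) :
  \sum_u (x == u)%:R * F u = F x.
Proof.
rewrite (bigD1 x) //= eqxx mul1r big1 ?addr0 // => u.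
by rewrite eq_sym => /negbTE->; rewrite mul0r.
Qed.

Lemma card_filter_sum (R : pzSemiRingType) (T : finType) (S : {set T})
    (P : pred T) :
  #|[set u in S | P u]|%:R = \sum_(u in S) ((P u)%:R : R).
Proof.
rewrite -sum1_card natr_sum (eq_bigl (fun u => (u \in S) && P u)) => [|u].
  by rewrite big_mkcondr; apply: eq_bigr => u _; case: (P u).
by rewrite inE.
Qed.

Lemma filter_full {T : finType} {S : {set T}} {P : pred T} :
  #|[set u in S | P u]| = #|S| -> {in S, forall u, P u}.
Proof.
move=> full u Su; have sub : [set u in S | P u] \subset S.
  by apply/subsetP => w; rewrite inE => /andP[].
by move: Su; rewrite -(subset_cardP full sub u) inE => /andP[].
Qed.

Lemma filter_empty {T : finType} {S : {set T}} {P : pred T} :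
  #|[set u in S | P u]| = 0%N -> {in S, forall u, ~~ P u}.
Proof.
move=> /eqP; rewrite cards_eq0 => /eqP empty u Su; apply/negP => Pu.
have : u \in [set u in S | P u] by rewrite inE Su Pu.
by rewrite empty inE.
Qed.

Section SwitchingCases.

Variables (n : nat) (A : 'M[int]_n).
Hypothesis A_entries : forall u v, A u v = 0 \/ A u v = 1 \/ A u v = -1.

Lemma netdeg_sum (S : {set 'I_n}) v : netdeg A S v = \sum_(w in S) A v w.
Proof.
rewrite /netdeg /dpos /dneg -!natz !card_filter_sum -sumrB.
apply: eq_bigr => w _.
by case: (A_entries v w) => [|[|]] ->.
Qed.

Lemma netdeg_const {S : {set 'I_n}} {v c} :
  {in S, forall w, A v w = c} -> netdeg A S v = #|S|%:Z * c.
Proof.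
by move=> Ac; rewrite netdeg_sum (eq_bigr _ Ac) sumr_const -mulr_natl natz.
Qed.

Lemma some_case S v : exactly_one_case A S v ->
  [|| case_a A S v, case_b A S v, case_c A S v, case_d A S v | case_e A S v].
Proof.
rewrite /exactly_one_case.
by case: (case_a A S v); case: (case_b A S v); case: (case_c A S v);
  case: (case_d A S v); case: (case_e A S v).
Qed.

Definition switched_entry S v y : int :=
  if case_a A S v then - A v y
  else if case_b A S v then (if A v y == 0 then 1 else 0)
  else if case_c A S v then (if A v y == 0 then -1 else 0)
  else A v y.

Lemma switched_entry_sum S v y : exactly_one_case A S v -> y \in S ->
  #|S|%:Z * (switched_entry S v y + A v y) = 2 * netdeg A S v.
Proof.
move=> /some_case cases Sy; rewrite /switched_entry.
case: ifP => [/eqP-> | not_a]; first by rewrite addNr !mulr0.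
case: ifP => [/andP[/eqP half /eqP noneg] | not_b].
  have := filter_empty noneg Sy; rewrite /netdeg noneg subr0 -half PoszM.
  by case: (A_entries v y) => [|[|]] ->; rewrite /= ?eqxx ?addr0 ?mulr1.
case: ifP => [/andP[/eqP half /eqP nopos] | not_c].
  have := filter_empty nopos Sy; rewrite /netdeg nopos sub0r -half PoszM.
  by case: (A_entries v y) => [|[|]] ->; rewrite /= ?eqxx ?add0r ?mulrN1 ?mulrN.
move: cases; rewrite not_a not_b not_c /= => /orP[] /eqP full;
  have same_sign w (Sw : w \in S) := eqP (filter_full full Sw);
  by rewrite (same_sign y Sy) (netdeg_const same_sign); ring.
Qed.

End SwitchingCases.

Section PartitionReflection.

Variables (n t : nat) (C : 'I_t -> {set 'I_n}) (D : {set 'I_n}).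
Hypothesis C_nonempty : forall i, C i != set0.
Hypothesis C_disjoint : forall i j, i != j -> [disjoint C i & C j].
Hypothesis CD_disjoint : forall i, [disjoint C i & D].
Hypothesis cover : forall x, x \in D \/ exists i, x \in C i.

Definition cell (x : 'I_n) : option 'I_t := [pick i | x \in C i].

Lemma cell_C {x i} : x \in C i -> cell x = Some i.
Proof.
rewrite /cell; case: pickP => [j Cj Ci|/(_ i)->//]; congr Some.
by apply/eqP; apply: contraTT Ci => /C_disjoint /disjointFr->.
Qed.

Lemma cell_D {x} : x \in D -> cell x = None.
Proof.
rewrite /cell; case: pickP => // j Cj Dx.
by rewrite (disjointFr (CD_disjoint j) Cj) in Dx.
Qed.

Lemma mem_cell x i : (x \in C i) = (cell x == Some i).
Proof.
apply/idP/eqP => [/cell_C//|].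
by rewrite /cell; case: pickP => // j Cj [<-].
Qed.

Lemma card_C_neq0 i : (#|C i|%:R : rat) != 0.
Proof. by rewrite pnatr_eq0 cards_eq0. Qed.

Definition weight (i : 'I_t) : rat := 2 / #|C i|%:R.

Definition reflector : 'M[rat]_n := \matrix_(x, y)
  if cell x is Some i then (y \in C i)%:R * weight i - (x == y)%:R
  else (x == y)%:R.

Lemma reflector_sym : reflector^T = reflector.
Proof.
apply/matrixP => x y; rewrite !mxE.
case: (eqVneq x y) => [->//|_].
case cx: (cell x) => [i|]; case cy: (cell y) => [j|];
  rewrite ?mem_cell ?cx ?cy ?(inj_eq Some_inj) /= ?mul0r //.
by case: (eqVneq i j) => [->|]; rewrite ?mul0r.
Qed.

Lemma weight_card i : weight i *+ #|C i| = 2.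
Proof. by rewrite -[RHS](divfK (card_C_neq0 i)) mulr_natr. Qed.

Lemma sum_reflector_cell i y :
  \sum_(u in C i) reflector u y = (y \in C i)%:R.
Proof.
under eq_bigr => u Cu do rewrite mxE (cell_C Cu).
rewrite sumrB sumr_const sum_indicator -mulrnAr weight_card.
by case: (y \in C i); rewrite /= ?mulr0 ?subrr // mulr1 -[2]/(1 + 1) addrK.
Qed.

Lemma mul_reflector_mx (M : 'M[rat]_n) x y :
  (reflector *m M) x y =
  if cell x is Some i then weight i * \sum_(u in C i) M u y - M x y else M x y.
Proof.
rewrite mxE; case cx: (cell x) => [i|]; last first.
  by under eq_bigr => u _ do rewrite mxE cx; rewrite sum_delta.
under eq_bigr => u _ do rewrite mxE cx mulrBl; rewrite sumrB sum_delta.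
rewrite [in RHS]big_mkcond mulr_sumr /=; congr (_ - _); apply: eq_bigr => u _.
by case: (u \in C i); rewrite ?mul1r ?mul0r ?mulr0.
Qed.

Lemma mul_mx_reflector (M : 'M[rat]_n) x y :
  (M *m reflector) x y =
  if cell y is Some j then weight j * \sum_(w in C j) M x w - M x y else M x y.
Proof.
rewrite -[M *m _]trmxK mxE trmx_mul reflector_sym mul_reflector_mx.
by case: (cell y) => [j|]; rewrite !mxE //; under eq_bigr do rewrite mxE.
Qed.

Lemma reflector_involution : reflector *m reflector = 1%:M.
Proof.
apply/matrixP => x y; rewrite mul_reflector_mx [RHS]mxE.
case cx: (cell x) => [i|]; rewrite ?sum_reflector_cell mxE cx //.
ring.
Qed.

Variable A : 'M[int]_n.
Hypothesis A_signed : signed_adj A.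
Hypothesis equitable : forall i j u w, u \in C i -> w \in C i ->
  netdeg A (C j) u = netdeg A (C j) w.
Hypothesis switchable : forall i v, v \in D -> exactly_one_case A (C i) v.

Definition Aq : 'M[rat]_n := map_mx intr A.

Lemma Aq_sym : Aq^T = Aq.
Proof.
by case: A_signed => A_sym _ _; apply/matrixP => x y; rewrite !mxE A_sym.
Qed.

Definition deg_into x j : rat := \sum_(w in C j) Aq x w.

Lemma deg_into_netdeg x j : deg_into x j = (netdeg A (C j) x)%:~R.
Proof.
case: A_signed => _ _ A_entries.
rewrite (netdeg_sum A_entries) rmorph_sum.
by apply: eq_bigr => w _; rewrite mxE.
Qed.

Lemma sum_col_deg_into i y : \sum_(u in C i) Aq u y = deg_into y i.
Proof. by apply: eq_bigr => u _; rewrite -{1}Aq_sym mxE. Qed.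

Lemma block_pair_sum i j x : x \in C i ->
  \sum_(u in C i) \sum_(w in C j) Aq u w = #|C i|%:R * deg_into x j.
Proof.
move=> Cx; rewrite mulr_natl -sumr_const; apply: eq_bigr => u Cu.
by rewrite -/(deg_into u j) !deg_into_netdeg (equitable j Cu Cx).
Qed.

Lemma reflector_conj_CC i j x y : x \in C i -> y \in C j ->
  (reflector *m Aq *m reflector) x y = Aq x y.
Proof.
move=> Cx Cy; rewrite mul_mx_reflector (cell_C Cy).
under eq_bigr => w _ do rewrite mul_reflector_mx (cell_C Cx).
rewrite mul_reflector_mx (cell_C Cx) sumrB -mulr_sumr exchange_big /=.
rewrite -/(deg_into x j) sum_col_deg_into (block_pair_sum j Cx).
have cross : #|C j|%:R * deg_into y i = #|C i|%:R * deg_into x j.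
  rewrite -(block_pair_sum i Cy) -(block_pair_sum j Cx) exchange_big /=.
  by apply: eq_bigr => w _; rewrite sum_col_deg_into.
rewrite (canRL (mulKf (card_C_neq0 j)) cross) /weight.
by field; rewrite !card_C_neq0.
Qed.

Lemma reflector_conj_DC j x y : x \in D -> y \in C j ->
  (reflector *m Aq *m reflector) x y = weight j * deg_into x j - Aq x y.
Proof.
move=> Dx Cy; rewrite mul_mx_reflector (cell_C Cy) mul_reflector_mx (cell_D Dx).
by under eq_bigr => w _ do rewrite mul_reflector_mx (cell_D Dx).
Qed.

Lemma reflector_conj_DD x y : x \in D -> y \in D ->
  (reflector *m Aq *m reflector) x y = Aq x y.
Proof.
move=> Dx Dy.
by rewrite mul_mx_reflector (cell_D Dy) mul_reflector_mx (cell_D Dx).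
Qed.

(* The conjugated matrix is symmetric, which handles the C_j x D entries. *)
Lemma reflector_conj_sym :
  (reflector *m Aq *m reflector)^T = reflector *m Aq *m reflector.
Proof. by rewrite !trmx_mul reflector_sym Aq_sym mulmxA. Qed.

Lemma new_entry_cell j v y : y \in C j ->
  new_entry A C v y = switched_entry A (C j) v y.
Proof. by move=> Cy; rewrite /new_entry -/(cell y) (cell_C Cy). Qed.

Lemma new_entry_reflector j v y : v \in D -> y \in C j ->
  (new_entry A C v y)%:~R = weight j * deg_into v j - Aq v y.
Proof.
move=> Dv Cy; case: A_signed => _ _ A_entries.
have := switched_entry_sum A_entries (switchable j Dv) Cy.
rewrite -(new_entry_cell v Cy) deg_into_netdeg mxE /weight.
move=> /(congr1 (intr : int -> rat)); rewrite !intrM intrD mulrAC => <-.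
by rewrite [_%:~R * _]mulrC mulfK ?card_C_neq0 ?addrK.
Qed.

Lemma reflector_conj_pi :
  reflector *m Aq *m reflector = map_mx intr (pi_matrix A C D).
Proof.
apply/matrixP => x y; rewrite [RHS]mxE /pi_matrix [in RHS]mxE.
have [Dx|[i Cx]] := cover x; have [Dy|[j Cy]] := cover y.
- by rewrite Dx Dy /= reflector_conj_DD // mxE.
- rewrite Dx (disjointFr (CD_disjoint j) Cy) /=.
  by rewrite (reflector_conj_DC Dx Cy) (new_entry_reflector Dx Cy).
- rewrite Dy (disjointFr (CD_disjoint i) Cx) /= -reflector_conj_sym mxE.
  by rewrite (reflector_conj_DC Dy Cx) (new_entry_reflector Dy Cx).
- rewrite (disjointFr (CD_disjoint i) Cx) (disjointFr (CD_disjoint j) Cy) /=.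
  by rewrite (reflector_conj_CC Cx Cy) mxE.
Qed.

End PartitionReflection.

Theorem theorem3p2 (n t : nat) (A : 'M[int]_n)
    (C : 'I_t -> {set 'I_n}) (D : {set 'I_n}) :
  signed_adj A ->
  (* pi = {C_1,...,C_t,D} is a partition of V *)
  (forall i, C i != set0) ->
  (forall i j, i != j -> [disjoint C i & C j]) ->
  (forall i, [disjoint C i & D]) ->
  (forall x, x \in D \/ exists i, x \in C i) ->
  (* condition (1) *)
  (forall i j u w, u \in C i -> w \in C i -> netdeg A (C j) u = netdeg A (C j) w) ->
  (* condition (2) *)
  (forall i v, v \in D -> exactly_one_case A (C i) v) ->
  char_poly A = char_poly (pi_matrix A C D).
Proof.
move=> A_signed C_nonempty C_disjoint CD_disjoint cover equitable switchable.
apply: (@map_inj_poly _ _ (intr : int -> rat)); [exact: intr_inj | by rewrite rmorph0 |].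
rewrite !map_char_poly -(reflector_conj_pi C_nonempty C_disjoint CD_disjoint
  cover A_signed equitable switchable).
by rewrite char_poly_involution_conj // reflector_involution.
Qed.
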